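(* Let $\nu\geq3$ be an integer. Let $M=\{u=F\}$ and $M'=\{u'=F'\}$ be rigid real-analytic hypersurfaces in $\mathbb{C}^3$ with $$F=m+G_3+\cdots+G_{\nu-1}+G_\nu+O(\nu+1),\qquad F'=m+G'_3+\cdots+G'_{\nu-1}+G'_\nu+O(\nu+1),$$ where $m=\frac{z\bar z+\frac12z^2\bar\zeta+\frac12\bar z^2\zeta}{1-\zeta\bar\zeta}$ and each $G_\mu,G'_\mu$ is weighted homogeneous of weight $\mu$. Suppose the biholomorphism $$z'=z+f_{\nu-1}(z,\zeta),\qquad\zeta'=\zeta+g_{\nu-2}(z,\zeta),\qquad w'=w+h_\nu(z,\zeta),$$ with $f_{\nu-1},g_{\nu-2},h_\nu$ holomorphic and weighted homogeneous of weights $\nu-1,\nu-2,\nu$ respectively, maps $M$ into $M'$. Then $G'_\mu=G_\mu$ for $3\leq\mu\leq\nu-1$, while $$G'_\nu=G_\nu-2\operatorname{Re}\Big\{\frac{\bar z+z\bar\zeta}{1-\zeta\bar\zeta}f_{\nu-1}(z,\zeta)+\frac{(\bar z+z\bar\zeta)^2}{2(1-\zeta\bar\zeta)^2}g_{\nu-2}(z,\zeta)-\frac12h_\nu(z,\zeta)\Big\},$$ all functions being evaluated at $(z,\zeta,\bar z,\bar\zeta)$.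
   Context: Coordinates on $\mathbb{C}^3$ are $(z,\zeta,w)$, $w=u+iv$. Weights: $[z]=[\bar z]=1$, $[\zeta]=[\bar\zeta]=0$, $[w]=2$; the monomial $z^a\zeta^b\bar z^c\bar\zeta^d$ has weight $a+c$. A convergent power series is weighted homogeneous of weight $\mu$ if all its monomials have weight $\mu$ (e.g. a holomorphic $f_{\mu}(z,\zeta)$ of weight $\mu$ is $z^\mu\phi(\zeta)$). $O(\mu)$ denotes a convergent power series all of whose monomials have weight $\geq\mu$. $2\operatorname{Re}\{X\}=X+\overline{X}$. *)

From Stdlib Require Import Reals.
From Coquelicot Require Import Coquelicot.
Open Scope R_scope.

Fixpoint csum (u : nat -> C) (N : nat) : C :=
  match N with O => u O | S n => Cplus (csum u n) (u (S n)) end.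
Fixpoint rsum (u : nat -> R) (N : nat) : R :=
  match N with O => u O | S n => rsum u n + u (S n) end.

(* A power series in the four independent variables (z, zeta, zbar, zetabar):
   s a b c d is the coefficient of z^a zeta^b zbar^c zetabar^d. *)
Definition ps4 := nat -> nat -> nat -> nat -> C.

Definition mono4 (a b c d : nat) (x1 x2 x3 x4 : C) : C :=
  Cmult (Cmult (Cmult (Cpow x1 a) (Cpow x2 b)) (Cpow x3 c)) (Cpow x4 d).

Definition psum4 (s : ps4) (x1 x2 x3 x4 : C) (N : nat) : C :=
  csum (fun a => csum (fun b => csum (fun c => csum (fun d =>
    Cmult (s a b c d) (mono4 a b c d x1 x2 x3 x4)) N) N) N) N.

Definition ps4_convergent (s : ps4) : Prop :=
  exists r, 0 < r /\ exists B, forall N,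
    rsum (fun a => rsum (fun b => rsum (fun c => rsum (fun d =>
      Cmod (s a b c d) * r ^ (a + b + c + d)) N) N) N) N <= B.

Definition ps4_sum (s : ps4) (x1 x2 x3 x4 : C) : C :=
  (real (Lim_seq (fun N => Re (psum4 s x1 x2 x3 x4 N))),
   real (Lim_seq (fun N => Im (psum4 s x1 x2 x3 x4 N)))).

Definition ev4 (s : ps4) (z zeta : C) : C :=
  ps4_sum s z zeta (Cconj z) (Cconj zeta).

Definition ps4_whom (mu : nat) (s : ps4) : Prop :=
  forall a b c d, (a + c)%nat <> mu -> s a b c d = RtoC 0.
Definition ps4_O (mu : nat) (s : ps4) : Prop :=
  forall a b c d, (a + c < mu)%nat -> s a b c d = RtoC 0.

Definition ps2 := nat -> nat -> C.
Definition psum2 (s : ps2) (z zeta : C) (N : nat) : C :=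
  csum (fun a => csum (fun b => Cmult (s a b) (Cmult (Cpow z a) (Cpow zeta b))) N) N.
Definition ps2_convergent (s : ps2) : Prop :=
  exists r, 0 < r /\ exists B, forall N,
    rsum (fun a => rsum (fun b => Cmod (s a b) * r ^ (a + b)) N) N <= B.
Definition ev2 (s : ps2) (z zeta : C) : C :=
  (real (Lim_seq (fun N => Re (psum2 s z zeta N))),
   real (Lim_seq (fun N => Im (psum2 s z zeta N)))).
Definition ps2_whom (k : nat) (s : ps2) : Prop :=
  forall a b, a <> k -> s a b = RtoC 0.

Definition mfun (z zeta : C) : C :=
  Cdiv (Cplus (Cplus (Cmult z (Cconj z))
                     (Cmult (Cmult (RtoC (/2)) (Cpow z 2)) (Cconj zeta)))
              (Cmult (Cmult (RtoC (/2)) (Cpow (Cconj z) 2)) zeta))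
       (Cminus (RtoC 1) (Cmult zeta (Cconj zeta))).

Definition Fdef (nu : nat) (G : nat -> ps4) (Rm : ps4) (z zeta : C) : C :=
  Cplus (Cplus (mfun z zeta) (csum (fun k => ev4 (G (3 + k)%nat) z zeta) (nu - 3)))
        (ev4 Rm z zeta).

Definition twoRe (X : C) : C := Cplus X (Cconj X).

Definition corr (f g h : ps2) (z zeta : C) : C :=
  let q := Cminus (RtoC 1) (Cmult zeta (Cconj zeta)) in
  let l := Cplus (Cconj z) (Cmult z (Cconj zeta)) in
  Cminus (Cplus (Cmult (Cdiv l q) (ev2 f z zeta))
                (Cmult (Cdiv (Cpow l 2) (Cmult (RtoC 2) (Cpow q 2))) (ev2 g z zeta)))
         (Cmult (RtoC (/2)) (ev2 h z zeta)).

From Stdlib Require Import Reals Lra Lia.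
From Coquelicot Require Import Coquelicot.
Open Scope R_scope.

(* Fix a small (z, zeta) and restrict everything to the real ray t |-> (t z, zeta),
   0 < t <= t0.  Weighted homogeneity turns G_mu (t z, zeta) into t^mu G_mu (z, zeta) and
   the remainders into O(t^(nu+1)), while the map becomes z' = t (z + e f), zeta' = zeta + e g,
   w' = w + t^nu h with e = t^(nu-2) and f, g, h evaluated at (z, zeta).  Rigidity then says
   that the real polynomial t^2 Im m + sum_mu t^mu Im G_mu is O(t^(nu+1)), so Im G_mu = 0.
   Expanding m to first order in e, the map equation says that
   sum_mu t^mu (Re G'_mu - Re G_mu) + t^nu (L - Re h) is O(t^(nu+1)), where L is the
   derivative of m in the direction (f, g); so these coefficients vanish too, and
   L - Re h is exactly 2 Re{...} of the statement. *)

(* [ring] and [field] only find the structure of [C] when the goal is typed at [C]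
   rather than at its unfolding [R * R]. *)
Ltac Cring := match goal with |- ?a = ?b => change (@eq C a b); ring end.
Ltac Cfield := match goal with |- ?a = ?b => change (@eq C a b); field end.

Lemma rsum_ext u v N : (forall k, (k <= N)%nat -> u k = v k) -> rsum u N = rsum v N.
Proof.
  induction N as [|N IH]; intros H; simpl; [apply H; lia|].
  rewrite IH by (intros; apply H; lia). now rewrite H by lia.
Qed.

Lemma csum_ext u v N : (forall k, (k <= N)%nat -> u k = v k) -> csum u N = csum v N.
Proof.
  induction N as [|N IH]; intros H; simpl; [apply H; lia|].
  rewrite IH by (intros; apply H; lia). now rewrite H by lia.
Qed.

Lemma rsum_le u v N : (forall k, (k <= N)%nat -> u k <= v k) -> rsum u N <= rsum v N.
Proof.
  induction N as [|N IH]; intros H; simpl; [apply H; lia|].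
  assert (rsum u N <= rsum v N) by (apply IH; intros; apply H; lia).
  specialize (H (S N) (le_n _)); lra.
Qed.

Lemma rsum_const c N : rsum (fun _ => c) N = INR (S N) * c.
Proof. induction N as [|N IH]; [simpl; ring|]. simpl rsum. rewrite IH, (S_INR (S N)). ring. Qed.

Lemma rsum_nonneg u N : (forall k, (k <= N)%nat -> 0 <= u k) -> 0 <= rsum u N.
Proof.
  intros H. replace 0 with (rsum (fun _ => 0) N) by (rewrite rsum_const; ring).
  now apply rsum_le.
Qed.

Lemma rsum_le_S u v N : (forall k, 0 <= u k <= v k) -> rsum u N <= rsum v (S N).
Proof.
  intros H. simpl.
  assert (rsum u N <= rsum v N) by (apply rsum_le; intros; apply H).
  specialize (H (S N)); lra.
Qed.

Lemma rsum_minus u v N : rsum (fun k => u k - v k) N = rsum u N - rsum v N.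
Proof. induction N; simpl; lra. Qed.

Lemma rsum_scal c u N : rsum (fun k => c * u k) N = c * rsum u N.
Proof. induction N; simpl; lra. Qed.

Lemma Rabs_rsum_le u N : Rabs (rsum u N) <= rsum (fun k => Rabs (u k)) N.
Proof. induction N; simpl; [lra|]. eapply Rle_trans; [apply Rabs_triang | lra]. Qed.

Lemma rsum_shift u N : rsum u (S N) = u O + rsum (fun k => u (S k)) N.
Proof.
  induction N as [|N IH]; [simpl; lra|].
  change (rsum u (S (S N))) with (rsum u (S N) + u (S (S N))). rewrite IH. simpl. lra.
Qed.

Lemma Re_csum u N : Re (csum u N) = rsum (fun k => Re (u k)) N.
Proof. induction N as [|N IH]; simpl; auto. now rewrite <- IH. Qed.

Lemma Im_csum u N : Im (csum u N) = rsum (fun k => Im (u k)) N.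
Proof. induction N as [|N IH]; simpl; auto. now rewrite <- IH. Qed.

Lemma csum_scal c u N : csum (fun k => Cmult c (u k)) N = Cmult c (csum u N).
Proof. induction N as [|N IH]; simpl; auto. rewrite IH. ring. Qed.

Definition rsum4 (v : nat -> nat -> nat -> nat -> R) N :=
  rsum (fun a => rsum (fun b => rsum (fun c => rsum (fun d => v a b c d) N) N) N) N.

Lemma rsum4_ext u v N : (forall a b c d, u a b c d = v a b c d) -> rsum4 u N = rsum4 v N.
Proof. intros H. unfold rsum4. repeat (apply rsum_ext; intros). apply H. Qed.

Lemma rsum4_le u v N : (forall a b c d, u a b c d <= v a b c d) -> rsum4 u N <= rsum4 v N.
Proof. intros H. unfold rsum4. repeat (apply rsum_le; intros). apply H. Qed.

Lemma rsum4_minus u v N :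
  rsum4 (fun a b c d => u a b c d - v a b c d) N = rsum4 u N - rsum4 v N.
Proof.
  unfold rsum4. rewrite <- rsum_minus. apply rsum_ext; intros.
  rewrite <- rsum_minus. apply rsum_ext; intros.
  rewrite <- rsum_minus. apply rsum_ext; intros.
  now rewrite <- rsum_minus.
Qed.

Lemma rsum4_scal k v N : rsum4 (fun a b c d => k * v a b c d) N = k * rsum4 v N.
Proof.
  unfold rsum4. rewrite <- rsum_scal. apply rsum_ext; intros.
  rewrite <- rsum_scal. apply rsum_ext; intros.
  rewrite <- rsum_scal. apply rsum_ext; intros.
  now rewrite <- rsum_scal.
Qed.

Lemma Rabs_rsum4_le v N : Rabs (rsum4 v N) <= rsum4 (fun a b c d => Rabs (v a b c d)) N.
Proof.
  unfold rsum4. eapply Rle_trans; [apply Rabs_rsum_le|]. apply rsum_le; intros.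
  eapply Rle_trans; [apply Rabs_rsum_le|]. apply rsum_le; intros.
  eapply Rle_trans; [apply Rabs_rsum_le|]. apply rsum_le; intros.
  apply Rabs_rsum_le.
Qed.

Lemma rsum4_incr v N : (forall a b c d, 0 <= v a b c d) -> rsum4 v N <= rsum4 v (S N).
Proof.
  intros H. unfold rsum4.
  apply rsum_le_S; intro a; split; [repeat (apply rsum_nonneg; intros); apply H|].
  apply rsum_le_S; intro b; split; [repeat (apply rsum_nonneg; intros); apply H|].
  apply rsum_le_S; intro c; split; [repeat (apply rsum_nonneg; intros); apply H|].
  apply rsum_le_S; intro d; split; [apply H | lra].
Qed.

Lemma Re_psum4 s x1 x2 x3 x4 N :
  Re (psum4 s x1 x2 x3 x4 N) =
  rsum4 (fun a b c d => Re (Cmult (s a b c d) (mono4 a b c d x1 x2 x3 x4))) N.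
Proof.
  unfold psum4, rsum4. rewrite Re_csum. apply rsum_ext; intros.
  rewrite Re_csum. apply rsum_ext; intros.
  rewrite Re_csum. apply rsum_ext; intros.
  now rewrite Re_csum.
Qed.

Lemma Im_psum4 s x1 x2 x3 x4 N :
  Im (psum4 s x1 x2 x3 x4 N) =
  rsum4 (fun a b c d => Im (Cmult (s a b c d) (mono4 a b c d x1 x2 x3 x4))) N.
Proof.
  unfold psum4, rsum4. rewrite Im_csum. apply rsum_ext; intros.
  rewrite Im_csum. apply rsum_ext; intros.
  rewrite Im_csum. apply rsum_ext; intros.
  now rewrite Im_csum.
Qed.

(* [real (Lim_seq u)] is [0] when [u] has no finite limit, which the bound covers too. *)
Lemma Rabs_real_Lim_seq_le u M : (forall N, Rabs (u N) <= M) -> Rabs (real (Lim_seq u)) <= M.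
Proof.
  intros H.
  assert (Hup : Rbar_le (Lim_seq u) (Lim_seq (fun _ => M))).
  { apply Lim_seq_le_loc. exists O. intros n _. specialize (H n). apply Rabs_le_between in H; lra. }
  assert (Hlo : Rbar_le (Lim_seq (fun _ => -M)) (Lim_seq u)).
  { apply Lim_seq_le_loc. exists O. intros n _. specialize (H n). apply Rabs_le_between in H; lra. }
  rewrite Lim_seq_const in Hup, Hlo.
  assert (0 <= M) by (specialize (H O); pose proof (Rabs_pos (u O)); lra).
  destruct (Lim_seq u) as [l| |]; simpl in *; try contradiction.
  all: try (apply Rabs_le_between; lra); rewrite Rabs_R0; lra.
Qed.

Lemma real_Lim_seq_scal_l c u : real (Lim_seq (fun N => c * u N)) = c * real (Lim_seq u).
Proof.
  rewrite Lim_seq_scal_l. destruct (Lim_seq u) as [l| |]; simpl; auto;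
  unfold Rbar_mult; simpl; destruct (Rle_dec 0 c) as [c0|]; try destruct (Rle_lt_or_eq_dec 0 c c0);
  simpl; try lra.
Qed.

Lemma real_Lim_seq_minus u v : ex_finite_lim_seq u -> ex_finite_lim_seq v ->
  real (Lim_seq (fun N => u N - v N)) = real (Lim_seq u) - real (Lim_seq v).
Proof.
  intros Hu Hv.
  pose proof (Lim_seq_correct' _ Hu) as Lu. pose proof (Lim_seq_correct' _ Hv) as Lv.
  now rewrite (is_lim_seq_unique _ _ (is_lim_seq_minus' _ _ _ _ Lu Lv)).
Qed.

(* Split [w] into the nonnegative parts [(W + w)/2] and [(W - w)/2], both monotone. *)
Lemma ex_finite_lim_rsum4_dominated (w W : nat -> nat -> nat -> nat -> R) B :
  (forall a b c d, Rabs (w a b c d) <= W a b c d) -> (forall N, rsum4 W N <= B) ->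
  ex_finite_lim_seq (fun N => rsum4 w N).
Proof.
  intros Hw HB.
  assert (Hpos : forall sg, sg = 1 \/ sg = -1 ->
            ex_finite_lim_seq (fun N => rsum4 (fun a b c d => (W a b c d + sg * w a b c d) / 2) N)).
  { intros sg Hsg.
    assert (H : forall a b c d, 0 <= (W a b c d + sg * w a b c d) / 2 <= W a b c d).
    { intros. specialize (Hw a b c d). apply Rabs_le_between in Hw.
      destruct Hsg; subst; lra. }
    apply ex_finite_lim_seq_incr with B; intros N.
    - apply rsum4_incr. apply H.
    - eapply Rle_trans; [apply rsum4_le; apply H | apply HB]. }
  destruct (Hpos 1 (or_introl eq_refl)) as [lp Lp].
  destruct (Hpos (-1) (or_intror eq_refl)) as [ln Ln].
  exists (lp - ln). eapply is_lim_seq_ext; [|apply is_lim_seq_minus'; [exact Lp | exact Ln]].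
  intros N. cbv beta. rewrite <- rsum4_minus. apply rsum4_ext. intros. lra.
Qed.

Lemma RtoC_mult_Re (c : R) (X : C) : Re (Cmult (RtoC c) X) = c * Re X.
Proof. destruct X; unfold Cmult, RtoC; simpl; ring. Qed.

Lemma RtoC_mult_Im (c : R) (X : C) : Im (Cmult (RtoC c) X) = c * Im X.
Proof. destruct X; unfold Cmult, RtoC; simpl; ring. Qed.

Lemma Cconj_RtoC_mult (t : R) z : Cconj (Cmult (RtoC t) z) = Cmult (RtoC t) (Cconj z).
Proof. destruct z; unfold Cconj, Cmult, RtoC; simpl; f_equal; ring. Qed.

Lemma Cmod_RtoC_mult (t : R) z : 0 <= t -> Cmod (Cmult (RtoC t) z) = t * Cmod z.
Proof. intros. rewrite Cmod_mult, Cmod_R, Rabs_right; lra. Qed.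

Lemma im_le_Cmod c : Rabs (Im c) <= Cmod c.
Proof. eapply Rle_trans; [|apply Rmax_Cmod]. apply Rmax_r. Qed.

Lemma C_eq_Re_Im (x y : C) : Re x = Re y -> Im x = Im y -> x = y.
Proof. destruct x, y; simpl; intros; subst; auto. Qed.

Lemma pow_le_pow_le1 t k n : 0 <= t <= 1 -> (k <= n)%nat -> t ^ n <= t ^ k.
Proof.
  intros Ht Hkn. replace n with (k + (n - k))%nat by lia. rewrite pow_add.
  assert (0 <= t ^ k) by (apply pow_le; lra).
  assert (0 <= t ^ (n - k)) by (apply pow_le; lra).
  assert (t ^ (n - k) <= 1 ^ (n - k)) by (apply pow_incr; lra). rewrite pow1 in *.
  nra.
Qed.

Lemma INR_mul_pow_half_le r n : 0 <= r -> INR n * (r / 2) ^ n <= r ^ n.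
Proof.
  intros Hr.
  assert (H2 : INR n <= 2 ^ n).
  { induction n as [|n IH]; [simpl; lra|]. rewrite S_INR. simpl.
    assert (1 <= 2 ^ n) by (apply pow_R1_Rle; lra). lra. }
  assert (0 < 2 ^ n) by (apply pow_lt; lra). assert (0 <= r ^ n) by (apply pow_le; lra).
  unfold Rdiv. rewrite Rpow_mult_distr, pow_inv.
  apply Rmult_le_reg_r with (2 ^ n); [lra|].
  replace (INR n * (r ^ n * / 2 ^ n) * 2 ^ n) with (r ^ n * INR n) by (field; lra).
  apply Rmult_le_compat_l; auto.
Qed.

Lemma Cmod_mono4 a b c d x1 x2 x3 x4 :
  Cmod (mono4 a b c d x1 x2 x3 x4) = Cmod x1 ^ a * Cmod x2 ^ b * Cmod x3 ^ c * Cmod x4 ^ d.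
Proof. unfold mono4. now rewrite !Cmod_mult, !Cmod_pow. Qed.

Lemma mono4_scale13 a b c d (t : R) x1 x2 x3 x4 :
  mono4 a b c d (Cmult (RtoC t) x1) x2 (Cmult (RtoC t) x3) x4 =
  Cmult (RtoC (t ^ (a + c))) (mono4 a b c d x1 x2 x3 x4).
Proof. unfold mono4. rewrite !Cpow_mult_l, pow_add, !RtoC_mult, !RtoC_pow. Cring. Qed.

(* [X] and [X'] behave like degree-[p] monomials evaluated at two points of the
   disc of radius [rho] at distance [delta]; the factor [rho] avoids a division. *)
Definition deg_close (rho delta : R) (p : nat) (X X' : C) : Prop :=
  Cmod X <= rho ^ p /\ Cmod X' <= rho ^ p /\
  rho * Cmod (Cminus X X') <= INR p * rho ^ p * delta.

Lemma deg_close_Cmult rho delta p q X X' Y Y' : 0 <= rho -> 0 <= delta ->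
  deg_close rho delta p X X' -> deg_close rho delta q Y Y' ->
  deg_close rho delta (p + q) (Cmult X Y) (Cmult X' Y').
Proof.
  intros Hr Hd [HX [HX' HXX]] [HY [HY' HYY]]. unfold deg_close.
  rewrite !Cmod_mult, pow_add, plus_INR.
  pose proof (Cmod_ge_0 X). pose proof (Cmod_ge_0 X'). pose proof (Cmod_ge_0 Y).
  pose proof (Cmod_ge_0 Y').
  assert (0 <= rho ^ p) by (apply pow_le; auto). assert (0 <= rho ^ q) by (apply pow_le; auto).
  split; [apply Rmult_le_compat; auto|split; [apply Rmult_le_compat; auto|]].
  replace (Cminus (Cmult X Y) (Cmult X' Y'))
    with (Cplus (Cmult X (Cminus Y Y')) (Cmult (Cminus X X') Y')) by Cring.
  eapply Rle_trans; [apply Rmult_le_compat_l; [auto | apply Cmod_triangle]|].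
  rewrite !Cmod_mult.
  pose proof (Cmod_ge_0 (Cminus Y Y')). pose proof (Cmod_ge_0 (Cminus X X')).
  assert (rho * (Cmod X * Cmod (Cminus Y Y')) <= rho ^ p * (INR q * rho ^ q * delta)).
  { rewrite Rmult_comm, Rmult_assoc, (Rmult_comm _ rho).
    apply Rmult_le_compat; auto. apply Rmult_le_pos; auto. }
  assert (rho * (Cmod (Cminus X X') * Cmod Y') <= INR p * rho ^ p * delta * rho ^ q).
  { rewrite <- Rmult_assoc. apply Rmult_le_compat; auto. apply Rmult_le_pos; auto. }
  nra.
Qed.

Lemma deg_close_Cpow rho delta (x y : C) a :
  0 <= rho -> Cmod x <= rho -> Cmod y <= rho -> Cmod (Cminus x y) <= delta ->
  deg_close rho delta a (Cpow x a) (Cpow y a).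
Proof.
  intros Hr Hx Hy Hxy. pose proof (Cmod_ge_0 (Cminus x y)).
  induction a as [|a IH].
  - unfold deg_close. simpl. replace (Cminus 1 1) with (RtoC 0) by Cring.
    rewrite Cmod_0, Cmod_1. lra.
  - replace (S a) with (1 + a)%nat by reflexivity. simpl Cpow.
    apply deg_close_Cmult; try lra; auto. unfold deg_close. simpl. nra.
Qed.

Lemma mono4_deg_close rho delta a b c d x1 x2 x3 x4 y1 y2 y3 y4 : 0 <= rho ->
  Cmod x1 <= rho -> Cmod x2 <= rho -> Cmod x3 <= rho -> Cmod x4 <= rho ->
  Cmod y1 <= rho -> Cmod y2 <= rho -> Cmod y3 <= rho -> Cmod y4 <= rho ->
  Cmod (Cminus x1 y1) <= delta -> Cmod (Cminus x2 y2) <= delta ->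
  Cmod (Cminus x3 y3) <= delta -> Cmod (Cminus x4 y4) <= delta ->
  deg_close rho delta (a + b + c + d) (mono4 a b c d x1 x2 x3 x4) (mono4 a b c d y1 y2 y3 y4).
Proof.
  intros. assert (0 <= delta) by (pose proof (Cmod_ge_0 (Cminus x1 y1)); lra).
  unfold mono4. repeat apply deg_close_Cmult; auto; apply deg_close_Cpow; auto.
Qed.

Definition ps4_majorant (s : ps4) (r B : R) : Prop :=
  forall N, rsum4 (fun a b c d => Cmod (s a b c d) * r ^ (a + b + c + d)) N <= B.

Lemma ps4_majorant_mono s r r' B B' :
  0 <= r' <= r -> B <= B' -> ps4_majorant s r B -> ps4_majorant s r' B'.
Proof.
  intros Hr HB H N. eapply Rle_trans; [|eapply Rle_trans; [apply (H N) | exact HB]].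
  apply rsum4_le; intros. apply Rmult_le_compat_l; [apply Cmod_ge_0 | apply pow_incr; lra].
Qed.

Lemma ps4_convergent_majorant s : ps4_convergent s -> exists r B, 0 < r /\ ps4_majorant s r B.
Proof. intros [r [Hr [B HB]]]. now exists r, B. Qed.

Lemma ps4_majorant_common (Sf : nat -> ps4) m n :
  (forall mu, (m <= mu <= n)%nat -> ps4_convergent (Sf mu)) ->
  exists r B, 0 < r /\ forall mu, (m <= mu <= n)%nat -> ps4_majorant (Sf mu) r B.
Proof.
  induction n as [|n IH]; intros H.
  - destruct (Nat.eq_dec m 0) as [->|Hm].
    + destruct (ps4_convergent_majorant _ (H O ltac:(lia))) as [r [B [Hr HB]]].
      exists r, B. split; auto. intros mu Hmu. now replace mu with O by lia.
    + exists 1, 0. split; [lra | intros; lia].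
  - destruct IH as [r1 [B1 [Hr1 H1]]]; [intros; apply H; lia|].
    destruct (Compare_dec.le_lt_dec m (S n)) as [L|L]; [|exists r1, B1; split; auto; intros; lia].
    destruct (ps4_convergent_majorant _ (H (S n) ltac:(lia))) as [r2 [B2 [Hr2 H2]]].
    exists (Rmin r1 r2), (Rmax B1 B2). split; [apply Rmin_pos; auto|].
    pose proof (Rmin_pos _ _ Hr1 Hr2).
    intros mu Hmu. destruct (Nat.eq_dec mu (S n)) as [->|e].
    + apply (ps4_majorant_mono _ r2 _ B2); [split; [lra | apply Rmin_r] | apply Rmax_r | exact H2].
    + apply (ps4_majorant_mono _ r1 _ B1); [split; [lra | apply Rmin_l] | apply Rmax_l |].
      apply H1; lia.
Qed.

Lemma ps4_O_term_le (s : ps4) a b c d x1 x2 x3 x4 r t k :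
  0 < r -> 0 <= t <= 1 -> ps4_O k s ->
  Cmod x1 <= t * r -> Cmod x3 <= t * r -> Cmod x2 <= r -> Cmod x4 <= r ->
  Cmod (Cmult (s a b c d) (mono4 a b c d x1 x2 x3 x4))
  <= t ^ k * (Cmod (s a b c d) * r ^ (a + b + c + d)).
Proof.
  intros Hr Ht HO H1 H3 H2 H4.
  assert (0 <= t ^ k) by (apply pow_le; lra).
  destruct (Compare_dec.le_lt_dec k (a + c)) as [L|L].
  2:{ rewrite (HO _ _ _ _ L), Cmult_0_l, Cmod_R, Rabs_R0. apply Rmult_le_pos; auto.
      apply Rmult_le_pos; [lra | apply pow_le; lra]. }
  rewrite Cmod_mult, Cmod_mono4.
  pose proof (Cmod_ge_0 x1). pose proof (Cmod_ge_0 x2).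
  pose proof (Cmod_ge_0 x3). pose proof (Cmod_ge_0 x4).
  assert (Hm : Cmod x1 ^ a * Cmod x2 ^ b * Cmod x3 ^ c * Cmod x4 ^ d
               <= (t * r) ^ a * r ^ b * (t * r) ^ c * r ^ d).
  { repeat apply Rmult_le_compat; try apply pow_incr; try lra;
      repeat apply Rmult_le_pos; apply pow_le; lra. }
  assert (Ht' : (t * r) ^ a * r ^ b * (t * r) ^ c * r ^ d
                = t ^ (a + c) * r ^ (a + b + c + d)).
  { rewrite !Rpow_mult_distr, !pow_add. ring. }
  assert (t ^ (a + c) <= t ^ k) by (apply pow_le_pow_le1; auto).
  assert (0 <= r ^ (a + b + c + d)) by (apply pow_le; lra).
  pose proof (Cmod_ge_0 (s a b c d)).
  rewrite Ht' in Hm.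
  apply Rle_trans with (Cmod (s a b c d) * (t ^ (a + c) * r ^ (a + b + c + d))).
  - apply Rmult_le_compat_l; auto.
  - rewrite (Rmult_comm (t ^ k)), !Rmult_assoc. apply Rmult_le_compat_l; auto.
    rewrite Rmult_comm. apply Rmult_le_compat_l; auto.
Qed.

Lemma ps4_sum_O_le s r B k t x1 x2 x3 x4 :
  0 < r -> 0 <= t <= 1 -> ps4_majorant s r B -> ps4_O k s ->
  Cmod x1 <= t * r -> Cmod x3 <= t * r -> Cmod x2 <= r -> Cmod x4 <= r ->
  Rabs (Re (ps4_sum s x1 x2 x3 x4)) <= t ^ k * B /\
  Rabs (Im (ps4_sum s x1 x2 x3 x4)) <= t ^ k * B.
Proof.
  intros Hr Ht HB HO H1 H3 H2 H4. assert (0 <= t ^ k) by (apply pow_le; lra).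
  assert (Hterm : forall N, rsum4 (fun a b c d => Cmod (Cmult (s a b c d) (mono4 a b c d x1 x2 x3 x4))) N
                            <= t ^ k * B).
  { intros N. eapply Rle_trans; [apply rsum4_le; intros; eapply ps4_O_term_le; eauto|].
    rewrite rsum4_scal. apply Rmult_le_compat_l; auto. }
  split; apply Rabs_real_Lim_seq_le; intros N; [rewrite Re_psum4 | rewrite Im_psum4];
    (eapply Rle_trans; [apply Rabs_rsum4_le | eapply Rle_trans; [|apply (Hterm N)]]);
    apply rsum4_le; intros; [apply re_le_Cmod | apply im_le_Cmod].
Qed.

Lemma ex_finite_lim_Re_psum4 s r B x1 x2 x3 x4 : 0 < r -> ps4_majorant s r B ->
  Cmod x1 <= r -> Cmod x2 <= r -> Cmod x3 <= r -> Cmod x4 <= r ->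
  ex_finite_lim_seq (fun N => Re (psum4 s x1 x2 x3 x4 N)).
Proof.
  intros Hr HB H1 H2 H3 H4.
  destruct (ex_finite_lim_rsum4_dominated
              (fun a b c d => Re (Cmult (s a b c d) (mono4 a b c d x1 x2 x3 x4)))
              (fun a b c d => Cmod (s a b c d) * r ^ (a + b + c + d)) B) as [l Hl]; auto.
  - intros. eapply Rle_trans; [apply re_le_Cmod|].
    rewrite <- (Rmult_1_l (_ * _)), <- (pow_O 1). apply (ps4_O_term_le s a b c d x1 x2 x3 x4 r 1 0); try lra.
    intros ? ? ? ? L; lia.
  - exists l. eapply is_lim_seq_ext; [|exact Hl]. intros; symmetry; apply Re_psum4.
Qed.

(* On the disc of radius [r/2] the factor [INR n] of the Lipschitz constant of a
   degree-[n] monomial is absorbed by [2 ^ n]. *)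
Lemma Cmod_mono4_sub_le r delta a b c d x1 x2 x3 x4 y1 y2 y3 y4 : 0 < r ->
  Cmod x1 <= r/2 -> Cmod x2 <= r/2 -> Cmod x3 <= r/2 -> Cmod x4 <= r/2 ->
  Cmod y1 <= r/2 -> Cmod y2 <= r/2 -> Cmod y3 <= r/2 -> Cmod y4 <= r/2 ->
  Cmod (Cminus x1 y1) <= delta -> Cmod (Cminus x2 y2) <= delta ->
  Cmod (Cminus x3 y3) <= delta -> Cmod (Cminus x4 y4) <= delta ->
  Cmod (Cminus (mono4 a b c d x1 x2 x3 x4) (mono4 a b c d y1 y2 y3 y4))
  <= 2 / r * (r ^ (a + b + c + d) * delta).
Proof.
  intros Hr. intros.
  assert (0 <= delta) by (pose proof (Cmod_ge_0 (Cminus x1 y1)); lra).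
  destruct (mono4_deg_close (r/2) delta a b c d x1 x2 x3 x4 y1 y2 y3 y4) as [_ [_ L]]; auto; try lra.
  pose proof (INR_mul_pow_half_le r (a + b + c + d) ltac:(lra)).
  apply Rmult_le_reg_l with (r / 2); [lra|].
  replace (r / 2 * (2 / r * (r ^ (a + b + c + d) * delta))) with (r ^ (a + b + c + d) * delta)
    by (field; lra).
  eapply Rle_trans; [apply L | apply Rmult_le_compat_r; auto].
Qed.

Lemma ps4_sum_Re_lipschitz s r B x1 x2 x3 x4 y1 y2 y3 y4 delta :
  0 < r -> ps4_majorant s r B ->
  Cmod x1 <= r/2 -> Cmod x2 <= r/2 -> Cmod x3 <= r/2 -> Cmod x4 <= r/2 ->
  Cmod y1 <= r/2 -> Cmod y2 <= r/2 -> Cmod y3 <= r/2 -> Cmod y4 <= r/2 ->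
  Cmod (Cminus x1 y1) <= delta -> Cmod (Cminus x2 y2) <= delta ->
  Cmod (Cminus x3 y3) <= delta -> Cmod (Cminus x4 y4) <= delta ->
  Rabs (Re (ps4_sum s x1 x2 x3 x4) - Re (ps4_sum s y1 y2 y3 y4)) <= 2 / r * B * delta.
Proof.
  intros Hr HB H1 H2 H3 H4 H5 H6 H7 H8 D1 D2 D3 D4.
  assert (Hd : 0 <= delta) by (pose proof (Cmod_ge_0 (Cminus x1 y1)); lra).
  unfold ps4_sum; simpl Re.
  rewrite <- real_Lim_seq_minus by (eapply ex_finite_lim_Re_psum4; eauto; lra).
  apply Rabs_real_Lim_seq_le. intros N. rewrite !Re_psum4, <- rsum4_minus.
  eapply Rle_trans; [apply Rabs_rsum4_le|].
  eapply Rle_trans; [|apply Rmult_le_compat_r; [exact Hd | apply Rmult_le_compat_l; [|apply (HB N)]]];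
    [| left; apply Rdiv_lt_0_compat; lra].
  rewrite (Rmult_comm _ delta), <- Rmult_assoc, (Rmult_comm delta), <- rsum4_scal.
  apply rsum4_le. intros a b c d.
  set (D := Cminus (mono4 a b c d x1 x2 x3 x4) (mono4 a b c d y1 y2 y3 y4)).
  assert (HD : Cmod D <= 2 / r * (r ^ (a + b + c + d) * delta))
    by (apply Cmod_mono4_sub_le; auto).
  replace (Re (Cmult (s a b c d) (mono4 a b c d x1 x2 x3 x4)) - Re (Cmult (s a b c d) (mono4 a b c d y1 y2 y3 y4)))
    with (Re (Cmult (s a b c d) D)) by (unfold D; destruct (s a b c d), (mono4 a b c d x1 x2 x3 x4),
      (mono4 a b c d y1 y2 y3 y4); unfold Cminus, Cplus, Copp, Cmult; simpl; ring).
  eapply Rle_trans; [apply re_le_Cmod|]. rewrite Cmod_mult.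
  pose proof (Cmod_ge_0 (s a b c d)).
  replace (2 / r * delta * (Cmod (s a b c d) * r ^ (a + b + c + d)))
    with (Cmod (s a b c d) * (2 / r * (r ^ (a + b + c + d) * delta))) by ring.
  apply Rmult_le_compat_l; auto.
Qed.

Lemma ev4_O_le s r B k t z w :
  0 < r -> 0 <= t <= 1 -> ps4_majorant s r B -> ps4_O k s -> Cmod z <= r -> Cmod w <= r ->
  Rabs (Re (ev4 s (Cmult (RtoC t) z) w)) <= t ^ k * B /\
  Rabs (Im (ev4 s (Cmult (RtoC t) z) w)) <= t ^ k * B.
Proof.
  intros Hr Ht HB HO Hz Hw. unfold ev4. rewrite Cconj_RtoC_mult.
  apply (ps4_sum_O_le s r B k t); auto; rewrite ?Cmod_RtoC_mult, ?Cmod_conj; try lra.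
  all: apply Rmult_le_compat_l; lra.
Qed.

Lemma ev4_Re_lipschitz s r B z w z' w' delta : 0 < r -> ps4_majorant s r B ->
  Cmod z <= r/2 -> Cmod w <= r/2 -> Cmod z' <= r/2 -> Cmod w' <= r/2 ->
  Cmod (Cminus z' z) <= delta -> Cmod (Cminus w' w) <= delta ->
  Rabs (Re (ev4 s z' w') - Re (ev4 s z w)) <= 2 / r * B * delta.
Proof.
  intros. unfold ev4.
  apply ps4_sum_Re_lipschitz; rewrite ?Cmod_conj, <- ?Cminus_conj, ?Cmod_conj; auto.
Qed.

Lemma ps4_sum_scale13 mu s (t : R) x1 x2 x3 x4 : ps4_whom mu s ->
  ps4_sum s (Cmult (RtoC t) x1) x2 (Cmult (RtoC t) x3) x4 =
  Cmult (RtoC (t ^ mu)) (ps4_sum s x1 x2 x3 x4).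
Proof.
  intros Hw.
  assert (E : forall N, psum4 s (Cmult (RtoC t) x1) x2 (Cmult (RtoC t) x3) x4 N =
                        Cmult (RtoC (t ^ mu)) (psum4 s x1 x2 x3 x4 N)).
  { intros N. unfold psum4.
    rewrite <- csum_scal. apply csum_ext; intros a _.
    rewrite <- csum_scal. apply csum_ext; intros b _.
    rewrite <- csum_scal. apply csum_ext; intros c _.
    rewrite <- csum_scal. apply csum_ext; intros d _.
    rewrite mono4_scale13. destruct (Nat.eq_dec (a + c) mu) as [<-|ne].
    - Cring.
    - rewrite (Hw _ _ _ _ ne). Cring. }
  unfold ps4_sum.
  rewrite (Lim_seq_ext _ (fun N => t ^ mu * Re (psum4 s x1 x2 x3 x4 N)))
    by (intros; rewrite E; apply RtoC_mult_Re).
  rewrite (Lim_seq_ext (fun N => Im _) (fun N => t ^ mu * Im (psum4 s x1 x2 x3 x4 N)))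
    by (intros; rewrite E; apply RtoC_mult_Im).
  rewrite !real_Lim_seq_scal_l. unfold Cmult, RtoC; simpl. f_equal; ring.
Qed.

Lemma ev4_scale mu s (t : R) z w : ps4_whom mu s ->
  ev4 s (Cmult (RtoC t) z) w = Cmult (RtoC (t ^ mu)) (ev4 s z w).
Proof. intros. unfold ev4. rewrite Cconj_RtoC_mult. now apply ps4_sum_scale13. Qed.

Lemma ev2_scale k s (t : R) z w : ps2_whom k s ->
  ev2 s (Cmult (RtoC t) z) w = Cmult (RtoC (t ^ k)) (ev2 s z w).
Proof.
  intros Hw.
  assert (E : forall N, psum2 s (Cmult (RtoC t) z) w N = Cmult (RtoC (t ^ k)) (psum2 s z w N)).
  { intros N. unfold psum2.
    rewrite <- csum_scal. apply csum_ext; intros a _.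
    rewrite <- csum_scal. apply csum_ext; intros b _.
    rewrite Cpow_mult_l, <- RtoC_pow. destruct (Nat.eq_dec a k) as [->|ne].
    - Cring.
    - rewrite (Hw _ _ ne). Cring. }
  unfold ev2.
  rewrite (Lim_seq_ext _ (fun N => t ^ k * Re (psum2 s z w N)))
    by (intros; rewrite E; apply RtoC_mult_Re).
  rewrite (Lim_seq_ext (fun N => Im _) (fun N => t ^ k * Im (psum2 s z w N)))
    by (intros; rewrite E; apply RtoC_mult_Im).
  rewrite !real_Lim_seq_scal_l. unfold Cmult, RtoC; simpl. f_equal; ring.
Qed.

Lemma eq0_of_Rabs_le_linear x t0 K : 0 < t0 ->
  (forall t, 0 < t <= t0 -> Rabs x <= K * t) -> x = 0.
Proof.
  intros Ht0 H. destruct (Req_dec x 0) as [e|ne]; auto. exfalso.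
  assert (Hx : 0 < Rabs x) by (apply Rabs_pos_lt; auto).
  assert (HK : 0 < K) by (specialize (H t0 ltac:(lra)); nra).
  set (t := Rmin t0 (Rabs x / (2 * K))).
  assert (0 < Rabs x / (2 * K)) by (apply Rdiv_lt_0_compat; lra).
  assert (0 < t) by (apply Rmin_pos; lra).
  assert (Kt : K * t <= Rabs x / 2).
  { replace (Rabs x / 2) with (K * (Rabs x / (2 * K))) by (field; lra).
    apply Rmult_le_compat_l; [lra | apply Rmin_r]. }
  specialize (H t ltac:(split; [lra | apply Rmin_l])). lra.
Qed.

Lemma poly_coef0_eq0 n p (c : nat -> R) t0 K : 0 < t0 ->
  (forall t, 0 < t <= t0 -> Rabs (rsum (fun k => c k * t ^ (k + p)) n) <= K * t ^ S p) ->
  c O = 0.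
Proof.
  intros Ht0 H.
  set (c' := fun k => if Nat.eq_dec k 0 then 0 else c k).
  set (A := rsum (fun k => Rabs (c k)) n).
  apply (eq0_of_Rabs_le_linear _ (Rmin t0 1) (K + A)); [apply Rmin_pos; lra|].
  intros t Ht.
  assert (t <= t0) by (eapply Rle_trans; [apply Ht | apply Rmin_l]).
  assert (t <= 1) by (eapply Rle_trans; [apply Ht | apply Rmin_r]).
  assert (Htp : 0 < t ^ p) by (apply pow_lt; lra).
  assert (Hsplit : rsum (fun k => c k * t ^ (k + p)) n
                   = c O * t ^ p + rsum (fun k => c' k * t ^ (k + p)) n).
  { clear. unfold c'. induction n as [|n IH]; simpl; [ring|]. rewrite IH. ring. }
  assert (Hrest : Rabs (rsum (fun k => c' k * t ^ (k + p)) n) <= A * t ^ S p).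
  { eapply Rle_trans; [apply Rabs_rsum_le|]. unfold A. rewrite Rmult_comm, <- rsum_scal.
    apply rsum_le. intros k _. unfold c'. destruct (Nat.eq_dec k 0) as [->|nz].
    - rewrite Rmult_0_l, Rabs_R0. apply Rmult_le_pos; [apply pow_le; lra | apply Rabs_pos].
    - rewrite Rabs_mult, (Rabs_right (t ^ _)), Rmult_comm by (apply Rle_ge, pow_le; lra).
      apply Rmult_le_compat_r; [apply Rabs_pos | apply pow_le_pow_le1; [lra | lia]]. }
  specialize (H t ltac:(lra)). rewrite Hsplit in H.
  pose proof (Rabs_triang (c O * t ^ p + rsum (fun k => c' k * t ^ (k + p)) n)
                          (- rsum (fun k => c' k * t ^ (k + p)) n)) as Htri.
  rewrite Rabs_Ropp in Htri.
  replace (c O * t ^ p + rsum (fun k => c' k * t ^ (k + p)) n + - rsum (fun k => c' k * t ^ (k + p)) n)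
    with (c O * t ^ p) in Htri by ring.
  rewrite Rabs_mult, (Rabs_right (t ^ p)) in Htri by lra.
  simpl pow in H, Hrest.
  apply Rmult_le_reg_r with (t ^ p); [exact Htp|]. nra.
Qed.

Lemma poly_coef_eq0_of_small n : forall p (c : nat -> R) t0 K, 0 < t0 ->
  (forall t, 0 < t <= t0 ->
     Rabs (rsum (fun k => c k * t ^ (k + p)) n) <= K * t ^ (n + p + 1)) ->
  forall k, (k <= n)%nat -> c k = 0.
Proof.
  induction n as [|n IH]; intros p c t0 K Ht0 H.
  - intros k Hk. replace k with O by lia.
    apply (poly_coef0_eq0 0 p c t0 K Ht0). intros t Ht.
    now replace (S p) with (0 + p + 1)%nat by lia; apply H.
  - assert (c0 : c O = 0).
    { apply (poly_coef0_eq0 (S n) p c (Rmin t0 1) (Rabs K)); [apply Rmin_pos; lra|].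
      intros t Ht.
      assert (t <= t0) by (eapply Rle_trans; [apply Ht | apply Rmin_l]).
      assert (t <= 1) by (eapply Rle_trans; [apply Ht | apply Rmin_r]).
      eapply Rle_trans; [apply H; lra|].
      eapply Rle_trans; [apply Rmult_le_compat_r; [apply pow_le; lra | apply Rle_abs]|].
      apply Rmult_le_compat_l; [apply Rabs_pos | apply pow_le_pow_le1; [lra | lia]]. }
    intros [|k] Hk; auto.
    apply (IH (S p) (fun k => c (S k)) t0 K Ht0); [|lia].
    intros t Ht. specialize (H t Ht). rewrite rsum_shift, c0, Rmult_0_l, Rplus_0_l in H.
    replace (n + S p + 1)%nat with (S n + p + 1)%nat by lia.
    erewrite rsum_ext; [exact H|]. intros j _. simpl. now replace (j + S p)%nat with (S (j + p)) by lia.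
Qed.

Lemma Cconj_RtoC x : Cconj (RtoC x) = RtoC x.
Proof. unfold Cconj, RtoC; simpl; f_equal; ring. Qed.

Lemma RtoC_inv2 : RtoC (/2) = Cinv (RtoC 2).
Proof. unfold Cinv, RtoC; simpl; f_equal; field. Qed.

Lemma RtoC2_neq0 : RtoC 2 <> RtoC 0.
Proof. intros E; injection E; lra. Qed.

Lemma one_sub_Cmod2 w : Cminus (RtoC 1) (Cmult w (Cconj w)) = RtoC (1 - Cmod w ^ 2).
Proof.
  rewrite Cmod2_alt. destruct w as [x y].
  unfold Cminus, Cplus, Copp, Cmult, Cconj, RtoC; simpl. f_equal; ring.
Qed.

Lemma one_sub_Cmod2_neq0 w : Cmod w < 1 -> Cminus (RtoC 1) (Cmult w (Cconj w)) <> RtoC 0.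
Proof.
  intros H. rewrite one_sub_Cmod2. intros E. injection E as E.
  pose proof (Cmod_ge_0 w). simpl in E. nra.
Qed.

Lemma mfun_scale (t : R) z w : Cmod w < 1 ->
  mfun (Cmult (RtoC t) z) w = Cmult (RtoC (t ^ 2)) (mfun z w).
Proof.
  intros H. pose proof (one_sub_Cmod2_neq0 w H). unfold mfun.
  rewrite Cconj_RtoC_mult, RtoC_pow. simpl Cpow. Cfield. auto.
Qed.

(* Writing [mfun = N / q] with [N (z + e a, w + e b) = N + e N1 + e^2 N2 + e^3 N3] and
   [q (w + e b) = q + e q1 + e^2 q2], [mfun_lin] is the first-order term in [e] and
   [mfun_rem] the rest divided by [e^2]. *)
Definition mfun_lin (z w a b : C) : C :=
  let q := Cminus (RtoC 1) (Cmult w (Cconj w)) in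
  let q1 := Copp (Cplus (Cmult b (Cconj w)) (Cmult w (Cconj b))) in
  let N1 := Cplus (Cplus (Cplus (Cmult a (Cconj z)) (Cmult z (Cconj a)))
     (Cmult (RtoC (/2)) (Cplus (Cmult (RtoC 2) (Cmult (Cmult z a) (Cconj w)))
                               (Cmult (Cmult z z) (Cconj b)))))
     (Cmult (RtoC (/2)) (Cplus (Cmult (RtoC 2) (Cmult (Cmult (Cconj z) (Cconj a)) w))
                               (Cmult (Cmult (Cconj z) (Cconj z)) b))) in
  Cdiv (Cminus N1 (Cmult q1 (mfun z w))) q.

Definition mfun_rem (z w a b : C) (e : R) : C :=
  let q1 := Copp (Cplus (Cmult b (Cconj w)) (Cmult w (Cconj b))) in
  let q2 := Copp (Cmult b (Cconj b)) in
  let N2 := Cplus (Cplus (Cmult a (Cconj a))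
     (Cmult (RtoC (/2)) (Cplus (Cmult (Cmult a a) (Cconj w))
                               (Cmult (RtoC 2) (Cmult (Cmult z a) (Cconj b))))))
     (Cmult (RtoC (/2)) (Cplus (Cmult (Cmult (Cconj a) (Cconj a)) w)
                               (Cmult (RtoC 2) (Cmult (Cmult (Cconj z) (Cconj a)) b)))) in
  let N3 := Cplus (Cmult (RtoC (/2)) (Cmult (Cmult a a) (Cconj b)))
                  (Cmult (RtoC (/2)) (Cmult (Cmult (Cconj a) (Cconj a)) b)) in
  let L := mfun_lin z w a b in
  let A := Cminus (Cminus N2 (Cmult q1 L)) (Cmult q2 (mfun z w)) in
  let B := Cminus N3 (Cmult q2 L) in
  let we := Cplus w (Cmult (RtoC e) b) in
  Cdiv (Cplus A (Cmult (RtoC e) B)) (Cminus (RtoC 1) (Cmult we (Cconj we))).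

Lemma mfun_expand z w a b (e : R) :
  Cmod w < 1 -> Cmod (Cplus w (Cmult (RtoC e) b)) < 1 ->
  mfun (Cplus z (Cmult (RtoC e) a)) (Cplus w (Cmult (RtoC e) b)) =
  Cplus (Cplus (mfun z w) (Cmult (RtoC e) (mfun_lin z w a b)))
        (Cmult (RtoC (e ^ 2)) (mfun_rem z w a b e)).
Proof.
  intros Hw Hwe. pose proof (one_sub_Cmod2_neq0 w Hw) as Hq.
  pose proof (one_sub_Cmod2_neq0 _ Hwe) as Hqe. rewrite !Cplus_conj, !Cconj_RtoC_mult in Hqe.
  unfold mfun_rem, mfun_lin, mfun. cbv zeta.
  rewrite !Cplus_conj, !Cconj_RtoC_mult, RtoC_inv2, RtoC_pow. simpl Cpow.
  Cfield. repeat split; auto using RtoC2_neq0.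
Qed.

Lemma mfun_rem_Re_bounded z w a b : exists K, forall e, 0 <= e <= 1 ->
  Cmod (Cplus w (Cmult (RtoC e) b)) <= 1/2 -> Rabs (Re (mfun_rem z w a b e)) <= K.
Proof.
  unfold mfun_rem. cbv zeta.
  set (L := mfun_lin z w a b). set (m := mfun z w).
  match goal with |- exists K, forall e, _ -> _ -> Rabs (Re (Cdiv (Cplus ?A (Cmult _ ?B)) _)) <= K =>
    exists (2 * (Cmod A + Cmod B)); set (A0 := A); set (B0 := B) end.
  intros e He Hwe. set (we := Cplus w (Cmult (RtoC e) b)) in *.
  eapply Rle_trans; [apply re_le_Cmod|].
  rewrite Cmod_div by (apply one_sub_Cmod2_neq0; lra).
  rewrite one_sub_Cmod2, Cmod_R.
  pose proof (Cmod_ge_0 we). assert (Cmod we ^ 2 <= 1/4) by (simpl; nra).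
  rewrite Rabs_right by lra.
  assert (Cmod (Cplus A0 (Cmult (RtoC e) B0)) <= Cmod A0 + Cmod B0).
  { eapply Rle_trans; [apply Cmod_triangle|]. rewrite Cmod_RtoC_mult by lra.
    pose proof (Cmod_ge_0 B0). nra. }
  pose proof (Cmod_ge_0 (Cplus A0 (Cmult (RtoC e) B0))).
  apply Rmult_le_reg_r with (1 - Cmod we ^ 2); [lra|].
  unfold Rdiv. rewrite Rmult_assoc, Rinv_l by lra. nra.
Qed.

Lemma twoRe_corr f g h z w : Cmod w < 1 ->
  twoRe (corr f g h z w) =
  Cminus (mfun_lin z w (ev2 f z w) (ev2 g z w)) (RtoC (Re (ev2 h z w))).
Proof.
  intros Hw. pose proof (one_sub_Cmod2_neq0 w Hw) as Hq.
  assert (Hq2 : Cmult (RtoC 2) (Cpow (Cminus (RtoC 1) (Cmult w (Cconj w))) 2) <> RtoC 0)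
    by (apply Cmult_neq_0; [apply RtoC2_neq0 | now apply Cpow_nz]).
  unfold twoRe, corr. cbv zeta. rewrite re_alt.
  rewrite !Cminus_conj, !Cplus_conj, !Cmult_conj, !Cdiv_conj by auto.
  rewrite !Cmult_conj, !Cpow_conj, !Cconj_RtoC, !Cminus_conj, !Cplus_conj, !Cmult_conj,
    !Cconj_conj, !Cconj_RtoC.
  unfold mfun_lin, mfun. cbv zeta. rewrite RtoC_inv2. simpl Cpow.
  Cfield. repeat split; auto using RtoC2_neq0.
Qed.

Lemma Fdef_scale nu G Rm (t : R) z w :
  (forall k, (k <= nu - 3)%nat -> ps4_whom (3 + k) (G (3 + k)%nat)) -> Cmod w < 1 ->
  Re (Fdef nu G Rm (Cmult (RtoC t) z) w) =
    t ^ 2 * Re (mfun z w) + rsum (fun k => Re (ev4 (G (3 + k)%nat) z w) * t ^ (k + 3)) (nu - 3)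
    + Re (ev4 Rm (Cmult (RtoC t) z) w) /\
  Im (Fdef nu G Rm (Cmult (RtoC t) z) w) =
    t ^ 2 * Im (mfun z w) + rsum (fun k => Im (ev4 (G (3 + k)%nat) z w) * t ^ (k + 3)) (nu - 3)
    + Im (ev4 Rm (Cmult (RtoC t) z) w).
Proof.
  intros HG Hw. unfold Fdef. rewrite mfun_scale by auto.
  assert (Hterm : forall k, (k <= nu - 3)%nat -> ev4 (G (3 + k)%nat) (Cmult (RtoC t) z) w
                    = Cmult (RtoC (t ^ (k + 3))) (ev4 (G (3 + k)%nat) z w)).
  { intros k Hk. rewrite (Nat.add_comm k). apply ev4_scale, HG, Hk. }
  split.
  - do 2 change (Re (Cplus ?x ?y)) with (Re x + Re y).
    rewrite RtoC_mult_Re, Re_csum. do 2 f_equal. apply rsum_ext; intros k Hk.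
    rewrite Hterm, RtoC_mult_Re by exact Hk. ring.
  - do 2 change (Im (Cplus ?x ?y)) with (Im x + Im y).
    rewrite RtoC_mult_Im, Im_csum. do 2 f_equal. apply rsum_ext; intros k Hk.
    rewrite Hterm, RtoC_mult_Im by exact Hk. ring.
Qed.

Lemma Im_G_eq0_of_rigid nu G Rm r B z w :
  (3 <= nu)%nat -> (forall k, (k <= nu - 3)%nat -> ps4_whom (3 + k) (G (3 + k)%nat)) ->
  0 < r < 1 -> ps4_majorant Rm r B -> ps4_O (nu + 1) Rm -> Cmod z <= r -> Cmod w <= r ->
  (forall t, 0 < t <= 1 -> Im (Fdef nu G Rm (Cmult (RtoC t) z) w) = 0) ->
  forall k, (k <= nu - 3)%nat -> Im (ev4 (G (3 + k)%nat) z w) = 0.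
Proof.
  intros Hnu HG Hr HB HO Hz Hw Him k Hk.
  set (c := fun k => match k with O => Im (mfun z w) | S k' => Im (ev4 (G (3 + k')%nat) z w) end).
  change (Im (ev4 (G (3 + k)%nat) z w)) with (c (S k)).
  apply (poly_coef_eq0_of_small (nu - 2) 2 c 1 B); [lra | | lia].
  intros t Ht. specialize (Him t Ht).
  destruct (Fdef_scale nu G Rm t z w HG ltac:(lra)) as [_ E]. rewrite E in Him.
  replace (nu - 2)%nat with (S (nu - 3)) by lia.
  replace (S (nu - 3) + 2 + 1)%nat with (nu + 1)%nat by lia.
  rewrite rsum_shift. change (c O * t ^ (0 + 2)) with (Im (mfun z w) * t ^ 2).
  rewrite (rsum_ext _ (fun k => Im (ev4 (G (3 + k)%nat) z w) * t ^ (k + 3)))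
    by (intros j _; now replace (S j + 2)%nat with (j + 3)%nat by lia).
  replace (Im (mfun z w) * t ^ 2 + _) with (- Im (ev4 Rm (Cmult (RtoC t) z) w)) by lra.
  rewrite Rabs_Ropp, Rmult_comm.
  apply (ev4_O_le Rm r B (nu + 1) t); auto; lra.
Qed.

Lemma Re_Fdef_scale_le nu G Rm r B z w :
  (forall k, (k <= nu - 3)%nat -> ps4_whom (3 + k) (G (3 + k)%nat)) ->
  0 < r < 1 -> ps4_majorant Rm r B -> ps4_O (nu + 1) Rm -> Cmod z <= r -> Cmod w <= r ->
  exists M, forall t, 0 < t <= 1 -> Rabs (Re (Fdef nu G Rm (Cmult (RtoC t) z) w)) <= t * M.
Proof.
  intros HG Hr HB HO Hz Hw.
  set (Gs := rsum (fun k => Rabs (Re (ev4 (G (3 + k)%nat) z w))) (nu - 3)).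
  exists (Rabs (Re (mfun z w)) + Gs + Rabs B). intros t Ht.
  destruct (Fdef_scale nu G Rm t z w HG ltac:(lra)) as [E _]. rewrite E.
  assert (Tk : forall k, (1 <= k)%nat -> 0 <= t ^ k <= t).
  { intros k Hk. split; [apply pow_le; lra|]. rewrite <- (pow_1 t) at 2. apply pow_le_pow_le1; [lra | lia]. }
  assert (Hm : Rabs (t ^ 2 * Re (mfun z w)) <= t * Rabs (Re (mfun z w))).
  { rewrite Rabs_mult, (Rabs_right (t ^ 2)) by (apply Rle_ge, Tk; lia).
    apply Rmult_le_compat_r; [apply Rabs_pos | apply Tk; lia]. }
  assert (HS : Rabs (rsum (fun k => Re (ev4 (G (3 + k)%nat) z w) * t ^ (k + 3)) (nu - 3)) <= t * Gs).
  { eapply Rle_trans; [apply Rabs_rsum_le|]. unfold Gs. rewrite <- rsum_scal. apply rsum_le.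
    intros k _. rewrite Rabs_mult, (Rabs_right (t ^ _)) by (apply Rle_ge, Tk; lia).
    rewrite Rmult_comm. apply Rmult_le_compat_r; [apply Rabs_pos | apply Tk; lia]. }
  assert (HR : Rabs (Re (ev4 Rm (Cmult (RtoC t) z) w)) <= t * Rabs B).
  { eapply Rle_trans; [apply (ev4_O_le Rm r B (nu + 1) t); auto; lra|].
    eapply Rle_trans; [apply Rmult_le_compat_l; [apply Tk; lia | apply Rle_abs]|].
    apply Rmult_le_compat_r; [apply Rabs_pos | apply Tk; lia]. }
  pose proof (Rabs_triang (t ^ 2 * Re (mfun z w)) (rsum (fun k => Re (ev4 (G (3 + k)%nat) z w) * t ^ (k + 3)) (nu - 3))).
  pose proof (Rabs_triang (t ^ 2 * Re (mfun z w) + rsum (fun k => Re (ev4 (G (3 + k)%nat) z w) * t ^ (k + 3)) (nu - 3))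
                          (Re (ev4 Rm (Cmult (RtoC t) z) w))).
  lra.
Qed.

Lemma rsum_Re_ev4_shift_le (s : nat -> ps4) n p r B z w z' w' delta t :
  0 < r -> 0 <= t <= 1 -> (forall k, (k <= n)%nat -> ps4_majorant (s k) r B) ->
  Cmod z <= r/2 -> Cmod w <= r/2 -> Cmod z' <= r/2 -> Cmod w' <= r/2 ->
  Cmod (Cminus z' z) <= delta -> Cmod (Cminus w' w) <= delta ->
  Rabs (rsum (fun k => Re (ev4 (s k) z' w') * t ^ (k + p)) n
        - rsum (fun k => Re (ev4 (s k) z w) * t ^ (k + p)) n)
  <= INR (S n) * (2 / r * B * delta) * t ^ p.
Proof.
  intros Hr Ht HB Hz Hw Hz' Hw' Dz Dw.
  replace (INR (S n) * (2 / r * B * delta) * t ^ p)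
    with (rsum (fun _ => 2 / r * B * delta * t ^ p) n) by (rewrite rsum_const; ring).
  rewrite <- rsum_minus.
  eapply Rle_trans; [apply Rabs_rsum_le|]. apply rsum_le. intros k Hk.
  rewrite <- Rmult_minus_distr_r, Rabs_mult, (Rabs_right (t ^ _)) by (apply Rle_ge, pow_le; lra).
  apply Rmult_le_compat.
  - apply Rabs_pos.
  - apply pow_le; lra.
  - apply (ev4_Re_lipschitz (s k) r B); auto.
  - apply pow_le_pow_le1; [lra | lia].
Qed.

Lemma rsum_add_last (u : nat -> R) X t n p :
  rsum (fun k => (u k + (if Nat.eq_dec k n then X else 0)) * t ^ (k + p)) n =
  rsum (fun k => u k * t ^ (k + p)) n + X * t ^ (n + p).
Proof.
  destruct n as [|n]; [simpl; ring|].
  do 2 change (rsum ?f (S n)) with (rsum f n + f (S n)).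
  rewrite (rsum_ext _ (fun k => u k * t ^ (k + p))).
  - destruct (Nat.eq_dec (S n) (S n)); [ring | lia].
  - intros k Hk. destruct (Nat.eq_dec k (S n)); [lia | ring].
Qed.

Lemma Cmod_perturb_le r z a (e da : R) :
  Cmod z <= r / 4 -> 0 <= e -> Cmod a <= da -> e * da <= r / 4 ->
  Cmod (Cplus z (Cmult (RtoC e) a)) <= r / 2 /\
  Cmod (Cminus (Cplus z (Cmult (RtoC e) a)) z) <= e * da.
Proof.
  intros Hz He Ha Heda. pose proof (Cmod_ge_0 a).
  replace (Cminus (Cplus z (Cmult (RtoC e) a)) z) with (Cmult (RtoC e) a) by Cring.
  rewrite Cmod_RtoC_mult by exact He.
  assert (e * Cmod a <= e * da) by (apply Rmult_le_compat_l; lra).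
  split; [eapply Rle_trans; [apply Cmod_triangle|]; rewrite Cmod_RtoC_mult|]; lra.
Qed.

Section MapDefect.

Variables (nu : nat) (G G' : nat -> ps4) (Rm Rm' : ps4) (z w a b c : C).
Hypothesis nu_ge3 : (3 <= nu)%nat.
Hypothesis G_whom : forall k, (k <= nu - 3)%nat -> ps4_whom (3 + k) (G (3 + k)%nat).
Hypothesis G'_whom : forall k, (k <= nu - 3)%nat -> ps4_whom (3 + k) (G' (3 + k)%nat).

Definition coef_defect (k : nat) : R :=
  Re (ev4 (G' (3 + k)%nat) z w) - Re (ev4 (G (3 + k)%nat) z w) +
  (if Nat.eq_dec k (nu - 3) then Re (mfun_lin z w a b) - Re c else 0).

Definition map_equation_at (t : R) : Prop :=
  Re (Fdef nu G Rm (Cmult (RtoC t) z) w) + t ^ nu * Re c =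
  Re (Fdef nu G' Rm' (Cmult (RtoC t) (Cplus z (Cmult (RtoC (t ^ (nu - 2))) a)))
                     (Cplus w (Cmult (RtoC (t ^ (nu - 2))) b))).

Lemma coef_defect_poly_eq (t : R) :
  Cmod w < 1 -> Cmod (Cplus w (Cmult (RtoC (t ^ (nu - 2))) b)) < 1 -> map_equation_at t ->
  let e := t ^ (nu - 2) in
  rsum (fun k => coef_defect k * t ^ (k + 3)) (nu - 3) =
  Re (ev4 Rm (Cmult (RtoC t) z) w)
  - Re (ev4 Rm' (Cmult (RtoC t) (Cplus z (Cmult (RtoC e) a))) (Cplus w (Cmult (RtoC e) b)))
  - t ^ 2 * e ^ 2 * Re (mfun_rem z w a b e)
  - (rsum (fun k => Re (ev4 (G' (3 + k)%nat) (Cplus z (Cmult (RtoC e) a))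
                                              (Cplus w (Cmult (RtoC e) b))) * t ^ (k + 3)) (nu - 3)
     - rsum (fun k => Re (ev4 (G' (3 + k)%nat) z w) * t ^ (k + 3)) (nu - 3)).
Proof.
  intros Hw Hwe Heq e. unfold map_equation_at in Heq. fold e in Hwe, Heq.
  assert (He : t ^ 2 * e = t ^ nu) by (unfold e; rewrite <- pow_add; f_equal; lia).
  destruct (Fdef_scale nu G Rm t z w G_whom Hw) as [E1 _].
  destruct (Fdef_scale nu G' Rm' t (Cplus z (Cmult (RtoC e) a)) _ G'_whom Hwe) as [E2 _].
  rewrite E1, E2, mfun_expand in Heq by auto.
  do 2 change (Re (Cplus ?x ?y)) with (Re x + Re y) in Heq.
  rewrite !RtoC_mult_Re in Heq.
  unfold coef_defect. rewrite rsum_add_last.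
  rewrite (rsum_ext _ (fun k => Re (ev4 (G' (3 + k)%nat) z w) * t ^ (k + 3)
                              - Re (ev4 (G (3 + k)%nat) z w) * t ^ (k + 3))) by (intros; ring).
  rewrite rsum_minus. replace (nu - 3 + 3)%nat with nu by lia.
  rewrite <- He in Heq |- *. lra.
Qed.

Variables (r BR BR' BG : R).
Hypothesis r_pos : 0 < r <= 1.
Hypothesis Rm_majorant : ps4_majorant Rm r BR.
Hypothesis Rm_O : ps4_O (nu + 1) Rm.
Hypothesis Rm'_majorant : ps4_majorant Rm' r BR'.
Hypothesis Rm'_O : ps4_O (nu + 1) Rm'.
Hypothesis G'_majorant : forall k, (k <= nu - 3)%nat -> ps4_majorant (G' (3 + k)%nat) r BG.
Hypothesis z_small : Cmod z <= r / 4.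
Hypothesis w_small : Cmod w <= r / 4.

(* Every term on the right of [coef_defect_poly_eq] is [O(t ^ (nu + 1))]: the
   remainders by [ps4_O], the [e^2] term since [2 + 2 (nu - 2) >= nu + 1], and the
   shift of [G'] by its Lipschitz bound, as [e t^3 = t ^ (nu + 1)]. *)
Lemma coef_defect_poly_le KE t :
  (forall e, 0 <= e <= 1 -> Cmod (Cplus w (Cmult (RtoC e) b)) <= 1/2 ->
     Rabs (Re (mfun_rem z w a b e)) <= KE) ->
  0 < t <= 1 -> t * (Cmod a + Cmod b) <= r / 4 -> map_equation_at t ->
  Rabs (rsum (fun k => coef_defect k * t ^ (k + 3)) (nu - 3))
  <= (BR + BR' + Rabs KE + INR (S (nu - 3)) * (2 / r * BG * (Cmod a + Cmod b))) * t ^ (nu - 3 + 3 + 1).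
Proof.
  intros HKE Ht Htda Hmap.
  set (da := Cmod a + Cmod b) in *. set (e := t ^ (nu - 2)).
  assert (He : 0 <= e <= t)
    by (unfold e; split; [apply pow_le; lra | rewrite <- (pow_1 t) at 2; apply pow_le_pow_le1; [lra | lia]]).
  assert (Heda : e * da <= r / 4)
    by (eapply Rle_trans; [apply Rmult_le_compat_r; [unfold da; pose proof (Cmod_ge_0 a); pose proof (Cmod_ge_0 b); lra | apply He] | exact Htda]).
  destruct (Cmod_perturb_le r z a e da) as [Hz' Dz]; auto; try lra; [unfold da; pose proof (Cmod_ge_0 b); lra|].
  destruct (Cmod_perturb_le r w b e da) as [Hw' Dw]; auto; try lra; [unfold da; pose proof (Cmod_ge_0 a); lra|].
  rewrite (coef_defect_poly_eq t) by (fold e; first [assumption | lra]). fold e.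
  replace (nu - 3 + 3 + 1)%nat with (nu + 1)%nat by lia.
  assert (0 <= t ^ (nu + 1)) by (apply pow_le; lra).
  destruct (ev4_O_le Rm r BR (nu + 1) t z w) as [HR1 _]; auto; try lra.
  destruct (ev4_O_le Rm' r BR' (nu + 1) t (Cplus z (Cmult (RtoC e) a)) (Cplus w (Cmult (RtoC e) b)))
    as [HR2 _]; auto; try lra.
  assert (HE : Rabs (t ^ 2 * e ^ 2 * Re (mfun_rem z w a b e)) <= t ^ (nu + 1) * Rabs KE).
  { assert (Ht2e2 : 0 <= t ^ 2 * e ^ 2 <= t ^ (nu + 1)).
    { split; [apply Rmult_le_pos; apply pow_le; lra|].
      unfold e. rewrite <- pow_mult, <- pow_add. apply pow_le_pow_le1; [lra | lia]. }
    rewrite Rabs_mult, (Rabs_right (t ^ 2 * e ^ 2)) by lra.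
    apply Rmult_le_compat; try lra; [apply Rabs_pos|].
    eapply Rle_trans; [apply HKE; lra | apply Rle_abs]. }
  pose proof (rsum_Re_ev4_shift_le (fun k => G' (3 + k)%nat) (nu - 3) 3 r BG z w
                (Cplus z (Cmult (RtoC e) a)) (Cplus w (Cmult (RtoC e) b)) (e * da) t
                ltac:(lra) ltac:(lra) G'_majorant ltac:(lra) ltac:(lra) Hz' Hw' Dz Dw) as HS.
  replace (INR (S (nu - 3)) * (2 / r * BG * (e * da)) * t ^ 3)
    with (INR (S (nu - 3)) * (2 / r * BG * da) * t ^ (nu + 1)) in HS
    by (replace (t ^ (nu + 1)) with (e * t ^ 3) by (unfold e; rewrite <- pow_add; f_equal; lia); ring).
  apply Rabs_le_between in HR1. apply Rabs_le_between in HR2.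
  apply Rabs_le_between in HE. apply Rabs_le_between in HS.
  apply Rabs_le_between. split; nra.
Qed.

Lemma coef_defect_eq0 t0 : 0 < t0 -> (forall t, 0 < t <= t0 -> map_equation_at t) ->
  forall k, (k <= nu - 3)%nat -> coef_defect k = 0.
Proof.
  intros Ht0 Hmap.
  destruct (mfun_rem_Re_bounded z w a b) as [KE HKE].
  set (da := Cmod a + Cmod b).
  assert (Hda : 0 <= da) by (unfold da; pose proof (Cmod_ge_0 a); pose proof (Cmod_ge_0 b); lra).
  set (t1 := Rmin t0 (Rmin 1 (r / (4 * (da + 1))))).
  assert (Ht1 : 0 < t1)
    by (apply Rmin_pos; [lra | apply Rmin_pos; [lra | apply Rdiv_lt_0_compat; lra]]).
  assert (Ht1t0 : t1 <= t0) by apply Rmin_l.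
  assert (Ht1le1 : t1 <= 1) by (eapply Rle_trans; [apply Rmin_r | apply Rmin_l]).
  assert (Ht1da : t1 * da <= r / 4).
  { assert (t1 <= r / (4 * (da + 1))) by (eapply Rle_trans; [apply Rmin_r | apply Rmin_r]).
    apply Rle_trans with (t1 * (da + 1)); [nra|].
    replace (r / 4) with (r / (4 * (da + 1)) * (da + 1)) by (field; lra).
    apply Rmult_le_compat_r; lra. }
  apply (poly_coef_eq0_of_small (nu - 3) 3 coef_defect t1
           (BR + BR' + Rabs KE + INR (S (nu - 3)) * (2 / r * BG * da)) Ht1).
  intros t Ht. apply (coef_defect_poly_le KE); auto; try lra.
  - apply Rle_trans with (t1 * da); [apply Rmult_le_compat_r|]; lra.
  - apply Hmap. lra.
Qed.

End MapDefect.

Lemma rigid_Im_G_eq0 nu G Rm :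
  (3 <= nu)%nat -> (forall mu, (3 <= mu <= nu)%nat -> ps4_whom mu (G mu)) ->
  ps4_convergent Rm -> ps4_O (nu + 1) Rm ->
  (exists d, 0 < d /\ forall z w, Cmod z < d -> Cmod w < d -> Im (Fdef nu G Rm z w) = 0) ->
  exists d, 0 < d /\ forall z w, Cmod z < d -> Cmod w < d ->
    forall mu, (3 <= mu <= nu)%nat -> Im (ev4 (G mu) z w) = 0.
Proof.
  intros Hnu HG HRc HRO [d [Hd Hrigid]].
  destruct (ps4_convergent_majorant _ HRc) as [r [B [Hr HB]]].
  set (d' := Rmin (Rmin r d) (1/2)).
  assert (Hd'r : d' <= r) by (eapply Rle_trans; [apply Rmin_l | apply Rmin_l]).
  assert (Hd'd : d' <= d) by (eapply Rle_trans; [apply Rmin_l | apply Rmin_r]).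
  assert (Hd'1 : d' <= 1/2) by apply Rmin_r.
  assert (Hd' : 0 < d') by (repeat apply Rmin_pos; lra).
  exists d'. split; [exact Hd'|]. intros z w Hz Hw mu Hmu.
  replace mu with (3 + (mu - 3))%nat by lia.
  apply (Im_G_eq0_of_rigid nu G Rm d' B z w); auto; try lra.
  - intros k Hk. apply HG. lia.
  - apply (ps4_majorant_mono _ r _ B); auto; lra.
  - intros t Ht. apply Hrigid; [|lra].
    rewrite Cmod_RtoC_mult by lra. pose proof (Cmod_ge_0 z). nra.
  - lia.
Qed.

Definition maps_into nu (G G' : nat -> ps4) (Rm Rm' : ps4) (f g h : ps2) (d : R) : Prop :=
  forall z zeta w, Cmod z < d -> Cmod zeta < d -> Cmod w < d ->
    Re w = Re (Fdef nu G Rm z zeta) ->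
    Re (Cplus w (ev2 h z zeta)) =
    Re (Fdef nu G' Rm' (Cplus z (ev2 f z zeta)) (Cplus zeta (ev2 g z zeta))).

Lemma map_equation_scaled nu G G' Rm Rm' f g h d z w (t : R) :
  (2 <= nu)%nat -> ps2_whom (nu - 1) f -> ps2_whom (nu - 2) g -> ps2_whom nu h ->
  maps_into nu G G' Rm Rm' f g h d ->
  Cmod (Cmult (RtoC t) z) < d -> Cmod w < d ->
  Rabs (Re (Fdef nu G Rm (Cmult (RtoC t) z) w)) < d ->
  map_equation_at nu G G' Rm Rm' z w (ev2 f z w) (ev2 g z w) (ev2 h z w) t.
Proof.
  intros Hnu Hf Hg Hh Hmap Hz Hw HF. unfold map_equation_at.
  set (u := Re (Fdef nu G Rm (Cmult (RtoC t) z) w)) in *.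
  specialize (Hmap (Cmult (RtoC t) z) w (RtoC u) Hz Hw).
  rewrite Cmod_R in Hmap. specialize (Hmap HF eq_refl).
  rewrite (ev2_scale nu h), (ev2_scale (nu - 1) f), (ev2_scale (nu - 2) g) in Hmap by auto.
  change (Re (Cplus (RtoC u) ?y)) with (u + Re y) in Hmap. rewrite RtoC_mult_Re in Hmap.
  rewrite Hmap. do 2 f_equal.
  replace (nu - 1)%nat with (S (nu - 2)) by lia. rewrite <- tech_pow_Rmult, RtoC_mult. Cring.
Qed.

Lemma coef_defect_eq0_of_map nu G G' Rm Rm' f g h r BR BR' BG d z w :
  (3 <= nu)%nat ->
  (forall k, (k <= nu - 3)%nat -> ps4_whom (3 + k) (G (3 + k)%nat)) ->
  (forall k, (k <= nu - 3)%nat -> ps4_whom (3 + k) (G' (3 + k)%nat)) ->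
  0 < r <= 1/2 ->
  ps4_majorant Rm r BR -> ps4_O (nu + 1) Rm -> ps4_majorant Rm' r BR' -> ps4_O (nu + 1) Rm' ->
  (forall k, (k <= nu - 3)%nat -> ps4_majorant (G' (3 + k)%nat) r BG) ->
  ps2_whom (nu - 1) f -> ps2_whom (nu - 2) g -> ps2_whom nu h ->
  maps_into nu G G' Rm Rm' f g h d ->
  Cmod z <= r / 4 -> Cmod w <= r / 4 -> Cmod z < d -> Cmod w < d ->
  forall k, (k <= nu - 3)%nat ->
    coef_defect nu G G' z w (ev2 f z w) (ev2 g z w) (ev2 h z w) k = 0.
Proof.
  intros Hnu HG HG' Hr HBR HOR HBR' HOR' HBG Hf Hg Hh Hmap Hzr Hwr Hzd Hwd.
  destruct (Re_Fdef_scale_le nu G Rm r BR z w) as [M HM]; auto; try lra.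
  pose proof (Rabs_pos M).
  assert (Hd : 0 < d) by (pose proof (Cmod_ge_0 z); lra).
  set (t0 := Rmin 1 (d / (Rabs M + 1))).
  assert (Ht0 : 0 < t0) by (apply Rmin_pos; [lra | apply Rdiv_lt_0_compat; lra]).
  assert (Ht01 : t0 <= 1) by apply Rmin_l.
  assert (Ht0d : t0 * (Rabs M + 1) <= d).
  { replace d with (d / (Rabs M + 1) * (Rabs M + 1)) by (field; lra).
    apply Rmult_le_compat_r; [lra | apply Rmin_r]. }
  apply (coef_defect_eq0 nu G G' Rm Rm' z w _ _ _ Hnu HG HG' r BR BR' BG
           ltac:(lra) HBR HOR HBR' HOR' HBG Hzr Hwr t0 Ht0).
  intros t Ht. apply (map_equation_scaled nu G G' Rm Rm' f g h d); auto; try lia.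
  - rewrite Cmod_RtoC_mult by lra. pose proof (Cmod_ge_0 z). nra.
  - specialize (HM t ltac:(lra)). pose proof (Rle_abs M). nra.
Qed.

Lemma map_coef_defect_eq0 nu G G' Rm Rm' f g h :
  (3 <= nu)%nat ->
  (forall mu, (3 <= mu <= nu)%nat ->
     ps4_whom mu (G mu) /\ ps4_convergent (G' mu) /\ ps4_whom mu (G' mu)) ->
  ps4_convergent Rm -> ps4_O (nu + 1) Rm -> ps4_convergent Rm' -> ps4_O (nu + 1) Rm' ->
  ps2_whom (nu - 1) f -> ps2_whom (nu - 2) g -> ps2_whom nu h ->
  (exists d, 0 < d /\ maps_into nu G G' Rm Rm' f g h d) ->
  exists d, 0 < d /\ forall z w, Cmod z < d -> Cmod w < d -> forall k, (k <= nu - 3)%nat ->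
    coef_defect nu G G' z w (ev2 f z w) (ev2 g z w) (ev2 h z w) k = 0.
Proof.
  intros Hnu HG HRc HRO HR'c HR'O Hf Hg Hh [d [Hd Hmap]].
  destruct (ps4_majorant_common G' 3 nu) as [rG [BG [HrG HBG]]]; [intros; apply HG; auto|].
  destruct (ps4_convergent_majorant _ HRc) as [rR [BR [HrR HBR]]].
  destruct (ps4_convergent_majorant _ HR'c) as [rR' [BR' [HrR' HBR']]].
  set (r := Rmin (Rmin rG rR) (Rmin rR' (1/2))).
  assert (Hr : 0 < r) by (repeat apply Rmin_pos; lra).
  assert (HrG' : r <= rG) by (eapply Rle_trans; apply Rmin_l).
  assert (HrR2 : r <= rR) by (eapply Rle_trans; [apply Rmin_l | apply Rmin_r]).
  assert (HrR'2 : r <= rR') by (eapply Rle_trans; [apply Rmin_r | apply Rmin_l]).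
  assert (Hr1 : r <= 1/2) by (eapply Rle_trans; apply Rmin_r).
  exists (Rmin (r / 4) d). split; [apply Rmin_pos; lra|]. intros z w Hz Hw.
  pose proof (Rmin_l (r / 4) d). pose proof (Rmin_r (r / 4) d).
  apply (coef_defect_eq0_of_map nu G G' Rm Rm' f g h r BR BR' BG d); auto; try lra.
  - intros k Hk. apply HG. lia.
  - intros k Hk. apply HG. lia.
  - apply (ps4_majorant_mono _ rR _ BR); auto; lra.
  - apply (ps4_majorant_mono _ rR' _ BR'); auto; lra.
  - intros k Hk. apply (ps4_majorant_mono _ rG _ BG); try lra. apply HBG. lia.
Qed.

Lemma G'_mu_eq nu G G' z w a b c mu : (3 <= mu <= nu - 1)%nat ->
  Im (ev4 (G mu) z w) = 0 -> Im (ev4 (G' mu) z w) = 0 ->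
  coef_defect nu G G' z w a b c (mu - 3) = 0 -> ev4 (G' mu) z w = ev4 (G mu) z w.
Proof.
  intros Hmu HIm HIm' HD.
  unfold coef_defect in HD. destruct (Nat.eq_dec (mu - 3) (nu - 3)); [lia|].
  replace (3 + (mu - 3))%nat with mu in HD by lia.
  apply C_eq_Re_Im; lra.
Qed.

Lemma G'_nu_eq nu G G' f g h z w : (3 <= nu)%nat -> Cmod w < 1 ->
  Im (ev4 (G nu) z w) = 0 -> Im (ev4 (G' nu) z w) = 0 ->
  coef_defect nu G G' z w (ev2 f z w) (ev2 g z w) (ev2 h z w) (nu - 3) = 0 ->
  ev4 (G' nu) z w = Cminus (ev4 (G nu) z w) (twoRe (corr f g h z w)).
Proof.
  intros Hnu Hw HIm HIm' HD.
  unfold coef_defect in HD. destruct (Nat.eq_dec (nu - 3) (nu - 3)) as [_|]; [|lia].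
  replace (3 + (nu - 3))%nat with nu in HD by lia.
  pose proof (twoRe_corr f g h z w Hw) as E.
  assert (HL : Im (mfun_lin z w (ev2 f z w) (ev2 g z w)) = 0).
  { assert (HR : Im (twoRe (corr f g h z w)) = 0)
      by (destruct (corr f g h z w); unfold twoRe, Cconj, Cplus; simpl; ring).
    rewrite E in HR. change (Im (Cminus ?x (RtoC ?y))) with (Im x - 0) in HR. lra. }
  rewrite E. apply C_eq_Re_Im.
  - change (Re (Cminus ?x (Cminus ?y (RtoC ?u)))) with (Re x - (Re y - u)). lra.
  - change (Im (Cminus ?x (Cminus ?y (RtoC ?u)))) with (Im x - (Im y - 0)). lra.
Qed.

Theorem proposition6p2 (nu : nat) (G G' : nat -> ps4) (Rm Rm' : ps4) (f g h : ps2) :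
  (3 <= nu)%nat ->
  (forall mu, (3 <= mu <= nu)%nat ->
     ps4_convergent (G mu) /\ ps4_whom mu (G mu) /\
     ps4_convergent (G' mu) /\ ps4_whom mu (G' mu)) ->
  ps4_convergent Rm -> ps4_O (nu + 1) Rm ->
  ps4_convergent Rm' -> ps4_O (nu + 1) Rm' ->
  ps2_convergent f -> ps2_whom (nu - 1) f ->
  ps2_convergent g -> ps2_whom (nu - 2) g ->
  ps2_convergent h -> ps2_whom nu h ->
  (* M and M' are rigid hypersurfaces: F, F' real-valued near 0 *)
  (exists d, 0 < d /\ forall z zeta, Cmod z < d -> Cmod zeta < d ->
     Im (Fdef nu G Rm z zeta) = 0 /\ Im (Fdef nu G' Rm' z zeta) = 0) ->
  (* the map sends (the germ at 0 of) M = {u = F} into M' = {u' = F'} *)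
  (exists d, 0 < d /\ forall z zeta w, Cmod z < d -> Cmod zeta < d -> Cmod w < d ->
     Re w = Re (Fdef nu G Rm z zeta) ->
     Re (Cplus w (ev2 h z zeta)) =
     Re (Fdef nu G' Rm' (Cplus z (ev2 f z zeta)) (Cplus zeta (ev2 g z zeta)))) ->
  exists d, 0 < d /\ forall z zeta, Cmod z < d -> Cmod zeta < d ->
    (forall mu, (3 <= mu <= nu - 1)%nat -> ev4 (G' mu) z zeta = ev4 (G mu) z zeta) /\
    ev4 (G' nu) z zeta = Cminus (ev4 (G nu) z zeta) (twoRe (corr f g h z zeta)).
Proof.
  intros Hnu HG HRc HRO HR'c HR'O _ Hf _ Hg _ Hh [d [Hd Hrigid]] Hmap.
  destruct (rigid_Im_G_eq0 nu G Rm) as [d1 [Hd1 ImG]]; auto.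
  { intros; apply HG; auto. }
  { exists d. split; auto. intros. apply Hrigid; auto. }
  destruct (rigid_Im_G_eq0 nu G' Rm') as [d2 [Hd2 ImG']]; auto.
  { intros; apply HG; auto. }
  { exists d. split; auto. intros. apply Hrigid; auto. }
  destruct (map_coef_defect_eq0 nu G G' Rm Rm' f g h) as [d3 [Hd3 HD]]; auto.
  { intros; repeat split; apply HG; auto. }
  set (d' := Rmin (Rmin d1 d2) (Rmin d3 1)).
  exists d'. split; [repeat apply Rmin_pos; lra|]. intros z w Hz Hw. unfold d' in Hz, Hw.
  pose proof (Rmin_l (Rmin d1 d2) (Rmin d3 1)). pose proof (Rmin_r (Rmin d1 d2) (Rmin d3 1)).
  pose proof (Rmin_l d1 d2). pose proof (Rmin_r d1 d2). pose proof (Rmin_l d3 1). pose proof (Rmin_r d3 1).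
  split.
  - intros mu Hmu. apply (G'_mu_eq nu G G' z w (ev2 f z w) (ev2 g z w) (ev2 h z w) mu Hmu);
      [apply ImG | apply ImG' | apply HD]; lra || lia.
  - apply G'_nu_eq; [lia | lra | apply ImG | apply ImG' | apply HD]; lra || lia.
Qed.
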